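(* Let $2\le r\le n$, and let $A$ and $A+\sum_{i=1}^r\mathbf{x}_i\mathbf{x}_i^{\top}$ both lie in $\mathrm{SGL}_n(\mathbb{F}_2)$, where $\mathbf{x}_1,\ldots,\mathbf{x}_r\in\mathbb{F}_2^n$ are linearly independent and $[\mathbf{x}_i^{\top}A^{-1}\mathbf{x}_j]_{i,j=1}^r$ has rank one and trace zero. Then $d\big(A,A+\sum_{i=1}^r\mathbf{x}_i\mathbf{x}_i^{\top}\big)\ge r+2$.
   Context: $\mathrm{SGL}_n(\mathbb{F}_2)$ is the set of invertible symmetric $n\times n$ matrices over the binary field; $d$ is the graph distance in the graph $\Gamma_n$ on $\mathrm{SGL}_n(\mathbb{F}_2)$ where $A\sim B$ iff $\mathrm{rank}(A-B)=1$. *)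

From mathcomp Require Import all_boot all_algebra.
Set Implicit Arguments. Unset Strict Implicit. Unset Printing Implicit Defensive.
Import GRing.Theory.
Local Open Scope ring_scope.

Definition SGL (n : nat) (A : 'M['F_2]_n) : bool :=
  (A^T == A) && (A \in unitmx).

Definition Gadj (n : nat) (A B : 'M['F_2]_n) : bool :=
  \rank (A - B) == 1%N.

Definition walk (n : nat) (A B : 'M['F_2]_n) (k : nat) : Prop :=
  exists s : seq 'M['F_2]_n,
    [/\ size s = k, path (@Gadj n) A s, all (@SGL n) (A :: s) & last A s = B].

(* d(A,B) >= m  (graph distance in Gamma_n, +infinity if no walk). *)
Definition dist_ge (n : nat) (A B : 'M['F_2]_n) (m : nat) : Prop :=
  forall k, walk A B k -> (m <= k)%N.

(* Over F_2 a symmetric rank-one matrix is an outer product u u^T, so a walk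
   A = M_0, ..., M_k = A + X^T X in Gamma_n is a sequence of updates
   M_(i+1) = M_i + y_i y_i^T with sum_i y_i y_i^T = X^T X.  If k <= r + 1,
   comparing the ranks of these two Gram matrices puts every y_i in the row
   space of X, say y_i = X^T c.  Invertibility of M_i and M_(i+1) forces
   y_i^T M_i^-1 y_i = 0, i.e. c^T G c = 0 for G = X M_i^-1 X^T; as G is
   symmetric of rank one, G c = 0, i.e. X M_i^-1 y_i = 0, and this in turn
   leaves X M_i^-1, hence G, unchanged along the walk.  Therefore
   X A^-1 Y^T = 0 for the matrix Y of rows y_i^T, so
   G X = X A^-1 X^T X = X A^-1 Y^T Y = 0 and G = 0, contradicting rank G = 1. *)

From mathcomp Require Import all_boot all_algebra.
Import GRing.Theory.
Set Implicit Arguments. Unset Strict Implicit.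
Local Open Scope ring_scope.

Lemma F2_eq1 (a : 'F_2) : a != 0 -> a = 1.
Proof. by case: a => [[|[|m]] //= ?] _; apply: val_inj. Qed.

Lemma F2_mulrr (a : 'F_2) : a * a = a.
Proof. by have [->|/F2_eq1 ->] := eqVneq a 0; rewrite ?mulr0 ?mulr1. Qed.

Lemma addmx_F2 m n (M : 'M['F_2]_(m, n)) : M + M = 0.
Proof. by apply/matrixP => i j; rewrite !mxE addrr_pchar2 // pchar_Fp. Qed.

Lemma oppmx_F2 m n (M : 'M['F_2]_(m, n)) : - M = M.
Proof. by rewrite -[LHS]add0r -(addmx_F2 M) addrK. Qed.

Lemma sym_rank1_F2 n (D : 'M['F_2]_n) :
  D^T = D -> \rank D = 1%N -> exists u : 'cV_n, D = u *m u^T.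
Proof.
move=> Dsym Drank.
have : exists (a : 'M_(n, \rank D)) (b : 'M_(\rank D, n)), D = a *m b.
  by exists (col_base D), (row_base D); rewrite mulmx_base.
rewrite Drank => -[a [b Dab]].
have Dij i j : D i j = a i 0 * b 0 j by rewrite Dab mxE big_ord1.
have DT i j : D j i = D i j by rewrite -{1}Dsym mxE.
have [i0 [j0 Dij0]] : exists i j, D i j != 0.
  by apply/matrix0Pn; rewrite -mxrank_eq0 Drank.
have /andP[_ /F2_eq1 bj0] : (a i0 0 != 0) && (b 0 j0 != 0).
  by rewrite -negb_or -mulf_eq0 -Dij.
have /andP[/F2_eq1 aj0 _] : (a j0 0 != 0) && (b 0 i0 != 0).
  by rewrite -negb_or -mulf_eq0 -Dij DT.
have ab i : a i 0 = b 0 i by rewrite -[a i 0]mulr1 -bj0 -Dij -DT Dij aj0 mul1r.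
by exists b^T; apply/matrixP => i j; rewrite Dij mxE big_ord1 !mxE ab.
Qed.

Lemma sym_rank1_quad0_F2 r (G : 'M['F_2]_r) (c : 'cV_r) :
  G^T = G -> \rank G = 1%N -> c^T *m G *m c = 0 -> G *m c = 0.
Proof.
move=> Gsym Grank; have [u ->] := sym_rank1_F2 Gsym Grank.
have -> : c^T *m (u *m u^T) *m c = (u^T *m c)^T *m (u^T *m c).
  by rewrite trmx_mul trmxK !mulmxA.
have -> : (u^T *m c)^T *m (u^T *m c) = u^T *m c.
  by apply/matrixP => i j; rewrite !ord1 !mxE big_ord1 !mxE F2_mulrr.
by rewrite -mulmxA => ->; rewrite mulmx0.
Qed.

Lemma unitmx_outer_update_quad0 n (M : 'M['F_2]_n) (y : 'cV_n) :
  M \in unitmx -> M + y *m y^T \in unitmx -> y^T *m invmx M *m y = 0.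
Proof.
move=> Mu Nu; set s := y^T *m invmx M *m y.
(* If s were 1, M^-1 y would lie in the kernel of M + y y^T. *)
have [s0 | /F2_eq1 s1] := eqVneq (s 0 0) 0; first by rewrite [s]mx11_scalar s0 raddf0.
have : (M + y *m y^T) *m (invmx M *m y) = 0.
  rewrite mulmxDl mulmxA mulmxV // mul1mx -!mulmxA (mulmxA y^T) -/s.
  by rewrite [s]mx11_scalar s1 mulmx1 addmx_F2.
move/(congr1 (mulmx (invmx (M + y *m y^T)))); rewrite mulKmx // mulmx0.
move/(congr1 (mulmx M)); rewrite mulmxA mulmxV // mul1mx mulmx0 => y0.
by move: s1; rewrite /s y0 mulmx0 mxE => /eqP; rewrite eq_sym oner_eq0.
Qed.

Lemma mulmx_invmx_stable (R : comUnitRingType) m n (X : 'M[R]_(m, n)) (M N : 'M_n) :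
  M \in unitmx -> N \in unitmx -> X *m invmx M *m (N - M) = 0 ->
  X *m invmx N = X *m invmx M.
Proof.
move=> Mu Nu XMNM.
have -> : X *m invmx N = X *m invmx M *m (N - (N - M)) *m invmx N.
  by rewrite subKr -(mulmxA X) mulVmx // mulmx1.
by rewrite mulmxBr XMNM subr0 -mulmxA mulmxV // mulmx1.
Qed.

Lemma gram_row_free_eqmx (F : fieldType) r n (X : 'M[F]_(r, n)) :
  row_free X -> (X^T *m X :=: X)%MS.
Proof.
move=> freeX; apply/eqmxP.
by rewrite -(mxrank_leqif_eq (submxMl _ _)).2 mxrankMfree // mxrank_tr.
Qed.

Lemma gram_eq_submx (F : fieldType) r k n (X : 'M[F]_(r, n)) (Y : 'M[F]_(k, n)) :
  row_free X -> (k <= r.+1)%N -> X^T *m X = Y^T *m Y -> (Y <= X)%MS.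
Proof.
move=> freeX le_k_r1 XY_gram; move/eqP: (freeX) => rankX.
have XY : (X <= Y)%MS by rewrite -(gram_row_free_eqmx freeX) XY_gram submxMl.
have rankY : \rank Y = r.
  have := mxrankS XY; rewrite rankX leq_eqVlt => /orP[/eqP // | lt_r_rankY].
  have freeY : row_free Y.
    by rewrite /row_free eqn_leq rank_leq_row (leq_trans le_k_r1).
  have := congr1 mxrank XY_gram.
  by rewrite (gram_row_free_eqmx freeX) (gram_row_free_eqmx freeY) rankX.
by rewrite -(mxrank_leqif_sup XY).2 rankX rankY.
Qed.

Lemma sum_outer_rows (R : pzRingType) r n (x : 'I_r -> 'cV[R]_n) :
  \sum_(i < r) x i *m (x i)^T
    = (\matrix_(i < r, j < n) x i j 0)^T *m \matrix_(i < r, j < n) x i j 0.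
Proof.
apply/matrixP => a b; rewrite summxE !mxE; apply: eq_bigr => i _.
by rewrite !mxE big_ord1 !mxE.
Qed.

Lemma bilinear_rows (R : pzRingType) r n (x : 'I_r -> 'cV[R]_n) (M : 'M_n) :
  \matrix_(i < r, j < r) ((x i)^T *m M *m x j) 0 0
    = \matrix_(i < r, j < n) x i j 0 *m M *m (\matrix_(i < r, j < n) x i j 0)^T.
Proof.
apply/matrixP => i j; rewrite !mxE; apply: eq_bigr => b _.
by rewrite !mxE; congr (_ * _); apply: eq_bigr => a _; rewrite !mxE.
Qed.

Lemma submx_seq_rows (F : fieldType) m n (X : 'M[F]_(m, n)) (ys : seq 'cV[F]_n) :
  (\matrix_(j < size ys, b < n) (nth 0 ys j) b 0 <= X)%MS ->
  all (fun y => y^T <= X)%MS ys.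
Proof.
move=> YX; apply/(all_nthP 0) => j lt_j; apply: submx_trans YX.
have -> : (nth 0 ys j)^T = row (Ordinal lt_j) (\matrix_(j, b) (nth 0 ys j) b 0).
  by apply/rowP => b; rewrite !mxE.
exact: row_sub.
Qed.

Lemma mulmx_seq_rows_eq0 (R : pzRingType) m n (Z : 'M[R]_(m, n)) (ys : seq 'cV[R]_n) :
  all (fun y => Z *m y == 0) ys ->
  Z *m (\matrix_(j < size ys, b < n) (nth 0 ys j) b 0)^T = 0.
Proof.
move=> /(all_nthP 0) Zys; apply/matrixP => i j.
have /eqP/matrixP/(_ i 0) := Zys j (ltn_ord j).
by rewrite !mxE => Zy; rewrite -[RHS]Zy; apply: eq_bigr => b _; rewrite !mxE.
Qed.

Lemma Gadj_SGL_outer_update n (M N : 'M['F_2]_n) :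
  SGL M -> SGL N -> Gadj M N -> exists y : 'cV_n, N = M + y *m y^T.
Proof.
move=> /andP[/eqP Msym _] /andP[/eqP Nsym _] /eqP MNrank.
have MNsym : (M - N)^T = M - N by rewrite linearB /= Msym Nsym.
have [y MNy] := sym_rank1_F2 MNsym MNrank.
by exists y; rewrite -MNy addrA addmx_F2 add0r oppmx_F2.
Qed.

Fixpoint unit_outer_updates (R : comUnitRingType) n (M : 'M[R]_n) (ys : seq 'cV[R]_n) :=
  if ys is y :: ys' then
    (M + y *m y^T \in unitmx) && unit_outer_updates (M + y *m y^T) ys'
  else true.

Lemma walk_outer_updates n (M : 'M['F_2]_n) (s : seq 'M_n) :
  SGL M -> path (@Gadj n) M s -> all (@SGL n) s ->
  exists ys : seq 'cV_n, [/\ size ys = size s, unit_outer_updates M ys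
                           & last M s = M + \sum_(y <- ys) y *m y^T].
Proof.
elim: s M => [|N s IHs] M SGL_M /=.
  by move=> _ _; exists [::]; rewrite big_nil addr0.
move=> /andP[MN Npath] /andP[SGL_N SGL_s].
have [ys [size_ys Nys ->]] := IHs _ SGL_N Npath SGL_s.
have [y N_y] := Gadj_SGL_outer_update SGL_M SGL_N MN.
exists (y :: ys); split => /=; [by rewrite size_ys | | by rewrite big_cons addrA N_y].
by rewrite -N_y Nys andbT; case/andP: SGL_N.
Qed.

Lemma outer_updates_orthogonal n r (X : 'M['F_2]_(r, n)) (M : 'M_n) (ys : seq 'cV_n) :
  M \in unitmx -> unit_outer_updates M ys ->
  (X *m invmx M *m X^T)^T = X *m invmx M *m X^T ->
  \rank (X *m invmx M *m X^T) = 1%N ->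
  all (fun y => y^T <= X)%MS ys -> all (fun y => X *m invmx M *m y == 0) ys.
Proof.
elim: ys M => [|y ys IHys] M //= Mu /andP[Nu Nys] Gsym Grank /andP[/submxP[c yc] ysX].
have y_c : y = X^T *m c^T by rewrite -trmx_mul -yc trmxK.
have XMy : X *m invmx M *m y = 0.
  apply/eqP; rewrite y_c mulmxA.
  apply/eqP/(sym_rank1_quad0_F2 Gsym Grank); rewrite trmxK.
  have := unitmx_outer_update_quad0 Mu Nu.
  by rewrite {1}yc y_c !mulmxA.
have XN : X *m invmx (M + y *m y^T) = X *m invmx M.
  by apply: mulmx_invmx_stable => //; rewrite (addrC M) addrK mulmxA XMy mul0mx.
by rewrite XMy eqxx -XN; apply: IHys; rewrite ?XN.
Qed.

Unset Implicit Arguments.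
Theorem lemma4p7 (n r : nat) (A : 'M['F_2]_n) (x : 'I_r -> 'cV['F_2]_n) :
  (2 <= r)%N -> (r <= n)%N ->
  SGL A ->
  SGL (A + \sum_(i < r) x i *m (x i)^T) ->
  row_free (\matrix_(i < r, j < n) x i j 0) ->
  \rank (\matrix_(i < r, j < r) ((x i)^T *m invmx A *m x j) 0 0) = 1%N ->
  \tr (\matrix_(i < r, j < r) ((x i)^T *m invmx A *m x j) 0 0) = 0 ->
  dist_ge A (A + \sum_(i < r) x i *m (x i)^T) (r + 2).
Proof.
move=> _ _ SGL_A _ freeX rankG _ k [s [<- path_s /= /andP[_ SGL_s] last_s]].
rewrite bilinear_rows in rankG; rewrite sum_outer_rows in last_s.
set X := \matrix_(i < r, j < n) x i j 0 in freeX rankG last_s.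
rewrite leqNgt addn2; apply/negP => lt_s_r2.
have [ys [size_ys updates_ys]] := walk_outer_updates SGL_A path_s SGL_s.
rewrite last_s (big_nth 0) big_mkord sum_outer_rows => /addrI gram.
set Y := \matrix_(j < size ys, b < n) (nth 0 ys j) b 0 in gram.
have YX : (Y <= X)%MS by apply: gram_eq_submx freeX _ gram; rewrite size_ys.
case/andP: SGL_A => /eqP Asym Au.
have Gsym : (X *m invmx A *m X^T)^T = X *m invmx A *m X^T.
  by rewrite !trmx_mul trmxK trmx_inv Asym mulmxA.
have XAY : X *m invmx A *m Y^T = 0.
  apply: mulmx_seq_rows_eq0.
  exact: outer_updates_orthogonal Au updates_ys Gsym rankG (submx_seq_rows YX).
have G0 : X *m invmx A *m X^T = 0.
  apply: (row_free_inj freeX) => /=.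
  by rewrite mul0mx -(mulmxA _ X^T) gram mulmxA XAY mul0mx.
by move: rankG; rewrite G0 mxrank0.
Qed.
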